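(* In the misspecified setting described in the context (in particular $\rho(A)<1$), the matrix $M=\bar{\mathbb{E}}[y_{t+1}y_t^\top]\,\Sigma_y^{-1}$ (the limit of the single-step least-squares estimate $\hat G_y$, equal to $CA\Sigma_xC^\top\Sigma_y^{-1}$) satisfies $\rho(M)\le 1$.
   Context: Let $A\in\mathbb{R}^{d_x\times d_x}$, $B_w\in\mathbb{R}^{d_x\times d_x}$, $C\in\mathbb{R}^{d_y\times d_x}$, $D_v\in\mathbb{R}^{d_y\times d_y}$ with spectral radius $\rho(A)<1$ and $D_vD_v^\top\succ0$. System: $x_{t+1}=Ax_t+B_ww_t$, $y_t=Cx_t+D_vv_t$, $w_t\sim\mathcal N(0,I_{d_x})$, $v_t\sim\mathcal N(0,I_{d_y})$ i.i.d. and independent, considered in steady state. $\Sigma_x$ and $\Sigma_y$ are the stationary covariances of $x_t$ and $y_t$ ($\Sigma_y\succ0$); $\bar{\mathbb{E}}[f(t)]=\lim_{T\to\infty}\mathbb{E}\frac1T\sum_{t=0}^Tf(t)$; $\rho(\cdot)$ is the spectral radius. *)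

From HB Require Import structures.
From mathcomp Require Import all_boot all_order all_algebra.
From mathcomp Require Import complex.
Set Implicit Arguments. Unset Strict Implicit. Unset Printing Implicit Defensive.
Import Order.TTheory GRing.Theory Num.Theory.
Local Open Scope ring_scope.

Section Spectral.
Variable R : rcfType.

Definition cmod (z : R[i]) : R :=
  Num.sqrt (complex.Re z ^+ 2 + complex.Im z ^+ 2).

Definition cplx_mx m n (A : 'M[R]_(m, n)) : 'M[R[i]]_(m, n) :=
  map_mx (fun x : R => x%:C%C) A.

Lemma char_poly_splits n (A : 'M[R]_n) :
  exists rs : seq R[i],
    char_poly (cplx_mx A) == \prod_(z <- rs) ('X - z%:P).
Proof.
have [rs Hrs] := closed_field_poly_normal (char_poly (cplx_mx A)).
by exists rs; apply/eqP; rewrite Hrs (monicP (char_poly_monic _)) scale1r.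
Qed.

(* the eigenvalues of A (complex roots of its characteristic polynomial,
   listed with algebraic multiplicity) *)
Definition eigvals n (A : 'M[R]_n) : seq R[i] := xchoose (char_poly_splits A).

(* spectral radius: largest modulus of an eigenvalue (0 for the empty matrix) *)
Definition spectral_radius n (A : 'M[R]_n) : R :=
  \big[Num.max/0]_(z <- eigvals A) cmod z.

Definition posdef n (P : 'M[R]_n) : Prop :=
  P^T = P /\ forall v : 'cV[R]_n, v != 0 -> 0 < (v^T *m P *m v) 0 0.

(* Stationary state covariance of x_{t+1} = A x_t + Bw w_t with w_t ~ N(0,I):
   it is characterized by the discrete Lyapunov equation (unique solution
   when rho(A) < 1). *)
Definition stationary_state_cov dx (A Bw Sx : 'M[R]_dx) : Prop :=
  Sx = A *m Sx *m A^T + Bw *m Bw^T.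

(* stationary output covariance Sigma_y = E[y_t y_t^T] *)
Definition Sigma_y dx dy (C : 'M[R]_(dy, dx)) (Dv : 'M[R]_dy) (Sx : 'M[R]_dx)
  : 'M[R]_dy := C *m Sx *m C^T + Dv *m Dv^T.

(* stationary lag-one cross covariance  Ebar[y_{t+1} y_t^T] = C A Sigma_x C^T *)
Definition lag1_cov dx dy (A : 'M[R]_dx) (C : 'M[R]_(dy, dx)) (Sx : 'M[R]_dx)
  : 'M[R]_dy := C *m A *m Sx *m C^T.

End Spectral.

(* If z is an
   eigenvalue of M = C A Sx C^T Sigma_y^-1 with left eigenvector u, then for w = u^* and
   p = C^T w we get z (w^* Sigma_y w) = p^* A Sx p.  Since rho(A) < 1 and
   Sx - A Sx A^T = Bw Bw^T is positive semidefinite, Stein's theorem shows that Sx is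
   symmetric positive semidefinite and that A^T contracts the seminorm p |-> p^* Sx p.
   A Cauchy-Schwarz argument then gives |p^* A Sx p| <= p^* Sx p <= w^* Sigma_y w, so
   |z| <= 1.  Stein's theorem is proved for triangular matrices by induction on the size
   using Schur complements, and transported to general matrices by Schur triangularization. *)

From HB Require Import structures.
From mathcomp Require Import all_boot all_order all_algebra.
From mathcomp Require Import complex ring.
Set Implicit Arguments. Unset Strict Implicit. Unset Printing Implicit Defensive.
Import Order.TTheory GRing.Theory Num.Theory.
Local Open Scope ring_scope.
Local Open Scope sesquilinear_scope.

Lemma nonunitmx_col_ker (F : fieldType) n (X : 'M[F]_n) : X \notin unitmx ->
  exists2 v : 'cV[F]_n, v != 0 & X *m v = 0.
Proof.
move=> nU; have : kermx X^T != 0 by rewrite kermx_eq0 row_free_unit unitmx_tr.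
case/rowV0Pn => u /sub_kermxP uX nz; exists u^T.
  by apply: contra nz => /eqP/(congr1 trmx); rewrite trmxK trmx0 => ->.
by rewrite -[X]trmxK -trmx_mul uX trmx0.
Qed.

Lemma char_poly_trmx (F : comNzRingType) n (A : 'M[F]_n) :
  char_poly A^T = char_poly A.
Proof.
rewrite /char_poly -det_tr; congr (\det _).
by rewrite /char_poly_mx linearB /= tr_scalar_mx map_trmx trmxK.
Qed.

(** * Hermitian forms *)

Section HermitianForm.
Variable C : numClosedFieldType.

Lemma trmxC_mul m n p (A : 'M[C]_(m, n)) (B : 'M[C]_(n, p)) :
  (A *m B)^t* = B^t* *m A^t*.
Proof. by rewrite trmx_mul map_mxM. Qed.

Lemma trmxCD m n (A B : 'M[C]_(m, n)) : (A + B)^t* = A^t* + B^t*.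
Proof. by rewrite linearD map_mxD. Qed.

Lemma trmxCN m n (A : 'M[C]_(m, n)) : (- A)^t* = - A^t*.
Proof. by rewrite linearN map_mxN. Qed.

Lemma trmxCB m n (A B : 'M[C]_(m, n)) : (A - B)^t* = A^t* - B^t*.
Proof. by rewrite trmxCD trmxCN. Qed.

Lemma trmxCZ m n c (A : 'M[C]_(m, n)) : (c *: A)^t* = c^* *: A^t*.
Proof. by apply/matrixP=> i j; rewrite !mxE rmorphM. Qed.

Lemma trmxC0 m n : (0 : 'M[C]_(m, n))^t* = 0.
Proof. by rewrite trmx0 map_mx0. Qed.

Lemma trmxC_inv n (A : 'M[C]_n) : (invmx A)^t* = invmx (A^t*).
Proof. by rewrite trmx_inv map_invmx. Qed.

Lemma trmxC_col m1 m2 n (A : 'M[C]_(m1, n)) (B : 'M[C]_(m2, n)) :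
  (col_mx A B)^t* = row_mx (A^t*) (B^t*).
Proof. by rewrite tr_col_mx map_row_mx. Qed.

Lemma trmxC_block m1 m2 n1 n2 (A : 'M[C]_(m1, n1)) B D (E : 'M[C]_(m2, n2)) :
  (block_mx A B D E)^t* = block_mx (A^t*) (D^t*) (B^t*) (E^t*).
Proof. by rewrite tr_block_mx map_block_mx. Qed.

Definition hform m n (X : 'M[C]_(m, n)) (u : 'cV[C]_m) (v : 'cV[C]_n) : C :=
  (u^t* *m X *m v) 0 0.

Definition psdmx n (X : 'M[C]_n) := forall v, 0 <= hform X v v.
Definition pdmx n (X : 'M[C]_n) := forall v, v != 0 -> 0 < hform X v v.

Section Sesquilinearity.
Variables m n : nat.
Implicit Types (X Y : 'M[C]_(m, n)) (u : 'cV[C]_m) (v : 'cV[C]_n).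

Lemma hformDl X u1 u2 v : hform X (u1 + u2) v = hform X u1 v + hform X u2 v.
Proof. by rewrite /hform trmxCD !mulmxDl mxE. Qed.
Lemma hformDr X u v1 v2 : hform X u (v1 + v2) = hform X u v1 + hform X u v2.
Proof. by rewrite /hform !mulmxDr mxE. Qed.
Lemma hformNl X u v : hform X (- u) v = - hform X u v.
Proof. by rewrite /hform trmxCN !mulNmx mxE. Qed.
Lemma hformNr X u v : hform X u (- v) = - hform X u v.
Proof. by rewrite /hform !mulmxN mxE. Qed.
Lemma hformZl X c u v : hform X (c *: u) v = c^* * hform X u v.
Proof. by rewrite /hform trmxCZ -!scalemxAl mxE. Qed.
Lemma hformZr X c u v : hform X u (c *: v) = c * hform X u v.
Proof. by rewrite /hform -!scalemxAr mxE. Qed.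
Lemma hform0l X v : hform X 0 v = 0.
Proof. by rewrite /hform trmxC0 !mul0mx mxE. Qed.
Lemma hform0r X u : hform X u 0 = 0.
Proof. by rewrite /hform mulmx0 mxE. Qed.
Lemma hformD X Y u v : hform (X + Y) u v = hform X u v + hform Y u v.
Proof. by rewrite /hform mulmxDr mulmxDl mxE. Qed.
Lemma hformN X u v : hform (- X) u v = - hform X u v.
Proof. by rewrite /hform mulmxN mulNmx mxE. Qed.
Lemma hformZ X c u v : hform (c *: X) u v = c * hform X u v.
Proof. by rewrite /hform -scalemxAr -scalemxAl mxE. Qed.

Lemma hformMl p (M : 'M[C]_(m, p)) X (w : 'cV[C]_p) v :
  hform X (M *m w) v = hform (M^t* *m X) w v.
Proof. by rewrite /hform trmxC_mul !mulmxA. Qed.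
Lemma hformMr p (M : 'M[C]_(n, p)) X u (w : 'cV[C]_p) :
  hform X u (M *m w) = hform (X *m M) u w.
Proof. by rewrite /hform !mulmxA. Qed.

Lemma hform_trmxC X u v : hform (X^t*) v u = (hform X u v)^*.
Proof.
rewrite /hform -[u in LHS]trmxCK -!trmxC_mul mulmxA.
by rewrite !mxE.
Qed.
End Sesquilinearity.

Lemma hform_congr m n (X : 'M[C]_m) (N : 'M[C]_(m, n)) u v :
  hform (N^t* *m X *m N) u v = hform X (N *m u) (N *m v).
Proof. by rewrite hformMl hformMr. Qed.

Lemma hform_herm n (X : 'M[C]_n) u v : X^t* = X -> hform X v u = (hform X u v)^*.
Proof. by move=> hX; rewrite -hform_trmxC hX. Qed.

Lemma hform_herm_real n (X : 'M[C]_n) v : X^t* = X -> hform X v v \is Num.real.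
Proof. by move=> hX; apply/CrealP; rewrite -hform_herm. Qed.

Lemma hform1_ge0 n (u : 'cV[C]_n) : 0 <= hform 1%:M u u.
Proof.
rewrite /hform mulmx1 mxE; apply: sumr_ge0 => j _.
by rewrite !mxE mulrC mul_conjC_ge0.
Qed.

Lemma psdmx_congr m n (N : 'M[C]_(m, n)) (X : 'M[C]_m) :
  psdmx X -> psdmx (N^t* *m X *m N).
Proof. by move=> pX v; rewrite hform_congr. Qed.

Lemma pdmx_psdmx n (X : 'M[C]_n) : pdmx X -> psdmx X.
Proof.
move=> pX v; have [->|nz] := eqVneq v 0; first by rewrite hform0l.
exact/ltW/pX.
Qed.

Lemma pdmx_unit n (X : 'M[C]_n) : pdmx X -> X \in unitmx.
Proof.
move=> pX; apply/negPn/negP => /nonunitmx_col_ker [v nz Xv].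
by have := pX v nz; rewrite /hform -mulmxA Xv mulmx0 mxE ltxx.
Qed.

Lemma hform_delta n (X : 'M[C]_n) i j :
  hform X (delta_mx i 0) (delta_mx j 0) = X i j.
Proof.
rewrite /hform; have -> : (delta_mx i 0 : 'cV[C]_n)^t* = delta_mx 0 i.
  by apply/matrixP => a b; rewrite !mxE rmorph_nat andbC.
by rewrite -rowE -colE !mxE.
Qed.

(* Polarization: testing against e_i + e_j and e_i + 'i e_j recovers X i j. *)
Lemma hform_diag_eq0 n (X : 'M[C]_n) : (forall v, hform X v v = 0) -> X = 0.
Proof.
move=> X0; apply/matrixP => i j; rewrite mxE.
set ei : 'cV[C]_n := delta_mx i 0; set ej : 'cV[C]_n := delta_mx j 0.
have E c : hform X (ei + c *: ej) (ei + c *: ej) = c * X i j + c^* * X j i.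
  rewrite !hformDl !hformDr !hformZl !hformZr !hform_delta.
  have := X0 ei; rewrite hform_delta => ->.
  have := X0 ej; rewrite hform_delta => ->.
  ring.
have /esym E1 := E 1; rewrite X0 conjC1 !mul1r in E1.
have /esym Ei := E 'i; rewrite X0 conjCi in Ei.
have : 'i * (X i j - X j i) = 0 by rewrite mulrBr -mulNr.
move/eqP; rewrite mulf_eq0 (negbTE (neq0Ci C)) /= subr_eq0 => /eqP eij.
move: E1; rewrite eij -mulr2n -mulr_natr => /eqP.
by rewrite mulf_eq0 pnatr_eq0 orbF => /eqP.
Qed.

(* Expand 0 <= hform X (om q - p) (om q - p) with om the phase of hform X q p. *)
Lemma norm_hform_le n (X : 'M[C]_n) p q : X^t* = X -> psdmx X ->
  hform X q q <= hform X p p -> `|hform X q p| <= hform X p p.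
Proof.
move=> hX pX hq; set t := hform X q p; set s := hform X p p; set a := hform X q q.
have [t0|tn] := eqVneq t 0; first by rewrite t0 normr0; apply: pX.
set r := `|t|.
have rn : r != 0 by rewrite normr_eq0.
have rr : r^* = r by apply: conj_Creal; apply: normr_real.
have ct : t^* = r ^+ 2 / t by rewrite /r normCK mulrAC divff // mul1r.
pose om := t / r.
have com : om^* = r / t by rewrite /om rmorphM fmorphV /= rr ct mulrAC expr2 mulfK.
have tq : hform X p q = t^* by rewrite (hform_herm q p hX).
have := pX (om *: q - p).
rewrite !hformDl !hformDr !hformNl !hformNr !hformZl !hformZr -/t -/s -/a tq com ct /om.
have -> : r / t * (t / r * a) - r / t * t + (- (t / r * (r ^+ 2 / t)) - - s)
   = a + s - (r + r).
  by field; rewrite tn rn.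
rewrite subr_ge0 => h.
have : r + r <= s + s by apply: le_trans h _; rewrite lerD2r.
by rewrite -!mulr2n lerMn2r.
Qed.

Lemma hform11 (X a b : 'M[C]_1) : hform X a b = (a 0 0)^* * X 0 0 * b 0 0.
Proof. by rewrite /hform !mxE !big_ord1 !mxE big_ord1 !mxE. Qed.

Lemma hform_block m1 m2 n1 n2 (a : 'M[C]_(m1, n1)) (b : 'M[C]_(m1, n2))
  (c : 'M[C]_(m2, n1)) (d : 'M[C]_(m2, n2)) u1 u2 v1 v2 :
  hform (block_mx a b c d) (col_mx u1 u2) (col_mx v1 v2) =
  hform a u1 v1 + hform b u1 v2 + hform c u2 v1 + hform d u2 v2.
Proof.
rewrite /hform trmxC_col mul_row_block mul_row_col !mulmxDl !mxE.
by rewrite !addrA; congr (_ + _); rewrite addrAC.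
Qed.

Lemma hform_col0 n (Y : 'M[C]_(1 + n)) w :
  hform Y (col_mx 0 w) (col_mx 0 w) = hform (drsubmx Y) w w.
Proof. by rewrite -{1}(submxK Y) hform_block !hform0l !hform0r !add0r. Qed.

End HermitianForm.

(** * Stein's theorem *)

Section SteinTheorem.
Variable C : numClosedFieldType.

Definition schur_compl n (Y : 'M[C]_(1 + n)) : C :=
  (ulsubmx Y - ursubmx Y *m invmx (drsubmx Y) *m dlsubmx Y) 0 0.

Section SchurComplement.
Variables (n : nat) (Y : 'M[C]_(1 + n)).
Hypotheses (hermY : Y^t* = Y) (unitY22 : drsubmx Y \in unitmx).
Let Y11 := ulsubmx Y.
Let Y12 := ursubmx Y.
Let Y21 := dlsubmx Y.
Let Y22 := drsubmx Y.

Lemma hform_schur_compl al w :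
  hform Y (col_mx al w) (col_mx al w) =
  schur_compl Y * `|al 0 0| ^+ 2 +
  hform Y22 (w + invmx Y22 *m Y21 *m al) (w + invmx Y22 *m Y21 *m al).
Proof.
have [_ herm21 _ herm22] : [/\ Y11^t* = Y11, Y21^t* = Y12, Y12^t* = Y21 & Y22^t* = Y22].
  by apply/eq_block_mx; rewrite -trmxC_block /Y11 /Y12 /Y21 /Y22 submxK.
rewrite -{1}(submxK Y) hform_block /schur_compl -/Y11 -/Y12 -/Y21 -/Y22.
rewrite !hformDl !hformDr.
rewrite [hform Y22 w (_ *m al)]hformMr [hform Y22 (_ *m al) w]hformMl.
rewrite [hform Y22 (_ *m al) _]hformMl hformMr.
have E1 : Y22 *m (invmx Y22 *m Y21) = Y21 by rewrite mulmxA mulmxV ?mul1mx.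
have E2 : (invmx Y22 *m Y21)^t* = Y12 *m invmx Y22.
  by rewrite trmxC_mul herm21 trmxC_inv herm22.
have -> : (Y11 - Y12 *m invmx Y22 *m Y21) 0 0 =
          Y11 0 0 - (Y12 *m invmx Y22 *m Y21) 0 0 by rewrite !mxE.
rewrite E1 E2 mulmxKV // mulmxA normCK !hform11.
ring.
Qed.

Lemma hform_schur_compl_witness :
  let w := - (invmx Y22 *m Y21 *m 1%:M) in
  hform Y (col_mx 1%:M w) (col_mx 1%:M w) = schur_compl Y.
Proof.
move=> w; rewrite hform_schur_compl /w addNr hform0l addr0.
by rewrite [_ 0 0]mxE eqxx mulr1n normr1 expr1n mulr1.
Qed.

Lemma schur_compl_real : schur_compl Y \is Num.real.
Proof. by rewrite -hform_schur_compl_witness; exact: hform_herm_real. Qed.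

Lemma pdmx_schur_compl : pdmx Y22 -> 0 < schur_compl Y -> pdmx Y.
Proof.
move=> pd22 sc_gt0 v nz; rewrite -(vsubmxK v) hform_schur_compl.
have [a0|a0] := eqVneq (usubmx v 0 0) 0.
  have u0 : usubmx v = 0 by apply/matrixP => i j; rewrite !ord1 a0 mxE.
  rewrite a0 normr0 expr0n /= mulr0 add0r u0 mulmx0 addr0; apply: pd22.
  by apply: contra nz => /eqP d0; rewrite -(vsubmxK v) u0 d0 col_mx0.
apply: ltr_wpDr; first exact: pdmx_psdmx.
by rewrite mulr_gt0 // exprn_gt0 // normr_gt0.
Qed.
End SchurComplement.

Lemma hform_stein n (P T : 'M[C]_n) v :
  hform (P - T^t* *m P *m T) v v = hform P v v - hform P (T *m v) (T *m v).
Proof. by rewrite hformD hformN hform_congr. Qed.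

Lemma trmxC_stein n (P T : 'M[C]_n) : P^t* = P -> (P - T^t* *m P *m T)^t* = P - T^t* *m P *m T.
Proof. by move=> hP; rewrite trmxCB !trmxC_mul trmxCK hP mulmxA. Qed.

Lemma trmxC_block_scalar n (p : C) (P : 'M[C]_n) : p \is Num.real -> P^t* = P ->
  (block_mx (p%:M : 'M_1) 0 0 P)^t* = block_mx p%:M 0 0 P.
Proof.
by move=> p_real hP; rewrite trmxC_block !trmxC0 hP tr_scalar_mx map_scalar_mx /= conj_Creal.
Qed.

Section BlockLyapunov.
Variables (n : nat) (x : 'M[C]_1) (c : 'cV[C]_n) (A : 'M[C]_n).
Hypothesis x_lt1 : `|x 0 0| < 1.
Let T := block_mx x 0 c A.

Lemma lyapunov_block (P : 'M[C]_n) :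
  P^t* = P -> pdmx (P - A^t* *m P *m A) ->
  exists2 p : C, 0 < p &
    pdmx (block_mx p%:M 0 0 P - T^t* *m block_mx p%:M 0 0 P *m T).
Proof.
move=> hP pdD; set D := P - A^t* *m P *m A in pdD.
pose Pp (p : C) : 'M[C]_(1 + n) := block_mx p%:M 0 0 P.
pose Q p := Pp p - T^t* *m Pp p *m T.
have QE p : Q p = block_mx (p%:M - (x^t* *m p%:M *m x + c^t* *m P *m c))
    (- (c^t* *m P *m A)) (- (A^t* *m P *m c)) D.
  rewrite /Q /Pp /T trmxC_block !trmxC0 !mulmx_block.
  rewrite !(mulmx0, mul0mx, addr0, add0r).
  by rewrite opp_block_mx add_block_mx !sub0r.
have hQ p : p \is Num.real -> Q p ^t* = Q p.
  by move=> p_real; apply/trmxC_stein/trmxC_block_scalar.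
set K := (c^t* *m P *m c + (c^t* *m P *m A) *m invmx D *m (A^t* *m P *m c)) 0 0.
have scQ p : schur_compl (Q p) = p * (1 - `|x 0 0| ^+ 2) - K.
  rewrite /schur_compl QE block_mxKul block_mxKur block_mxKdl block_mxKdr.
  have -> : x^t* *m p%:M *m x = (p * `|x 0 0| ^+ 2)%:M.
    apply/matrixP => i j; rewrite !ord1.
    have -> : (x^t* *m p%:M *m x) 0 0 = hform p%:M x x by [].
    by rewrite hform11 [in RHS]mxE [p%:M 0 0]mxE eqxx !mulr1n normCK; ring.
  rewrite !mulNmx !mulmxN opprK !mxE /K !mxE eqxx !mulr1n.
  ring.
have unitD : D \in unitmx := pdmx_unit pdD.
have K_real : K \is Num.real.
  have := schur_compl_real (hQ 0 (rpred0 _)); rewrite scQ mul0r sub0r rpredN.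
  by apply; rewrite QE block_mxKdr.
have x2_lt1 : 0 < 1 - `|x 0 0| ^+ 2 by rewrite subr_gt0 exprn_ilt1.
(* The Schur complement of Q p is affine in p with positive slope. *)
pose p := (1 + `|K|) / (1 - `|x 0 0| ^+ 2).
have p_gt0 : 0 < p by rewrite divr_gt0 // ltr_wpDr ?normr_ge0 ?ltr01.
exists p => //; apply: (@pdmx_schur_compl _ (Q p)); first exact/hQ/gtr0_real.
- by rewrite QE block_mxKdr.
- by rewrite QE block_mxKdr.
rewrite scQ /p mulfVK ?gt_eqF // -addrA ltr_wpDr ?ltr01 // subr_ge0.
exact: real_ler_norm.
Qed.

End BlockLyapunov.

Lemma diag_block_lt1 n (x : 'M[C]_1) c (A : 'M[C]_n) :
  (forall i, `|block_mx x 0 c A i i| < 1) ->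
  `|x 0 0| < 1 /\ forall i, `|A i i| < 1.
Proof.
move=> h; split; first by have := h (lshift n 0); rewrite block_mxEul.
by move=> i; have := h (rshift 1 i); rewrite block_mxEdr.
Qed.

Lemma trig_lyapunov n (T : 'M[C]_n) : is_trig_mx T -> (forall i, `|T i i| < 1) ->
  exists P, [/\ P^t* = P, pdmx P & pdmx (P - T^t* *m P *m T)].
Proof.
move: n T; apply: trigsqmx_ind => [_|n x c A _ IH /diag_block_lt1 [x_lt1 /IH]].
  by exists 0; split => [|v|v]; rewrite ?trmxC0 // flatmx0 eqxx.
move=> [P [hP pdP pdD]]; have [p p_gt0 pdQ] := lyapunov_block c x_lt1 hP pdD.
have hPp := trmxC_block_scalar (gtr0_real p_gt0) hP.
exists (block_mx p%:M 0 0 P); split => //.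
apply: pdmx_schur_compl; rewrite ?block_mxKdr // ?pdmx_unit //.
by rewrite /schur_compl block_mxKul block_mxKur !mul0mx subr0 mxE eqxx mulr1n.
Qed.

(* Induct on the size: restricting to vectors col_mx 0 w handles the lower block, and
   testing at the Schur complement witness shows the Schur complement is positive. *)
Lemma trig_stein_strict n (T : 'M[C]_n) : is_trig_mx T -> (forall i, `|T i i| < 1) ->
  forall Y, Y^t* = Y -> pdmx (Y - T^t* *m Y *m T) -> pdmx Y.
Proof.
move: n T; apply: trigsqmx_ind => [_ Y _ _ v|n x c A _ IH].
  by rewrite flatmx0 eqxx.
move=> /diag_block_lt1 [x_lt1 A_lt1] Y hY pdQ.
have hY22 : (drsubmx Y)^t* = drsubmx Y.
  by have := congr1 drsubmx hY; rewrite -{1}(submxK Y) trmxC_block block_mxKdr.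
have pdY22 : pdmx (drsubmx Y).
  apply: (IH A_lt1) => // w nz; rewrite hform_stein -!hform_col0.
  have -> : col_mx 0 (A *m w) = block_mx x 0 c A *m col_mx 0 w.
    by rewrite mul_block_col !mulmx0 !mul0mx !add0r.
  by rewrite -hform_stein pdQ // col_mx_eq0 negb_and nz orbT.
have unitY22 := pdmx_unit pdY22.
apply: pdmx_schur_compl => //.
set w := - (invmx (drsubmx Y) *m dlsubmx Y *m 1%:M).
have nz : col_mx (1%:M : 'cV[C]_1) w != 0.
  by rewrite col_mx_eq0 negb_and matrix_nonzero1.
have := pdQ _ nz; rewrite hform_stein hform_schur_compl_witness //.
rewrite mul_block_col mulmx1 mul0mx addr0 hform_schur_compl // subr_gt0 => h.
have : schur_compl Y * `|x 0 0| ^+ 2 < schur_compl Y.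
  by apply: le_lt_trans h; rewrite lerDl; apply: pdmx_psdmx.
have x2_lt1 : `|x 0 0| ^+ 2 < 1 by rewrite exprn_ilt1.
by rewrite -subr_gt0 -{1}[schur_compl Y]mulr1 -mulrBr pmulr_lgt0 // subr_gt0.
Qed.

(* Perturb X by a small multiple of a strict Lyapunov matrix of T. *)
Lemma trig_stein n (T : 'M[C]_n) : is_trig_mx T -> (forall i, `|T i i| < 1) ->
  forall X, X^t* = X -> psdmx (X - T^t* *m X *m T) -> psdmx X.
Proof.
move=> trigT T_lt1 X hX psdQ.
have [P [hP pdP pdQP]] := trig_lyapunov trigT T_lt1.
have pd_perturb e : 0 < e -> pdmx (X + e *: P).
  move=> e_gt0; apply: (trig_stein_strict trigT T_lt1).
    by rewrite trmxCD trmxCZ hX hP conj_Creal // gtr0_real.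
  move=> v nz; rewrite hform_stein !hformD !hformZ opprD addrACA -mulrBr -!hform_stein.
  by rewrite ltr_wpDl // mulr_gt0 // pdQP.
move=> v; have [->|nz] := eqVneq v 0; first by rewrite hform0l.
rewrite real_leNgt ?rpred0 ?hform_herm_real //; apply/negP => Xv_lt0.
have e_gt0 : 0 < - hform X v v / hform P v v by rewrite divr_gt0 ?oppr_gt0 ?pdP.
have := pd_perturb _ e_gt0 v nz.
by rewrite hformD hformZ mulfVK ?gt_eqF ?pdP // subrr ltxx.
Qed.

Lemma trig_root_diag n (T : 'M[C]_n) i : is_trig_mx T -> root (char_poly T) (T i i).
Proof.
move=> trigT; rewrite /root char_poly_trig // horner_prod (bigD1 i) //=.
by rewrite hornerXsubC subrr mul0r.
Qed.

(* Stein's theorem, proved by Schur triangularization. *)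
Lemma stein n (M : 'M[C]_n) : (forall z, root (char_poly M) z -> `|z| < 1) ->
  forall X, X^t* = X -> psdmx (X - M^t* *m X *m M) -> psdmx X.
Proof.
case: n M => [|n] M M_lt1 X hX psdQ; first by move=> v; rewrite [v]flatmx0 hform0l.
have [P P_unitary] := Schur M (ltn0Sn n).
have unitP := unitarymx_unit P_unitary.
rewrite /similar_to /conjmx pinvmxE //; set T := P *m M *m invmx P => trigT.
have T_lt1 i : `|T i i| < 1.
  apply: M_lt1; rewrite -eigenvalue_root_char.
  have /eigenvalueP [u uT nz] : eigenvalue T (T i i).
    by rewrite eigenvalue_root_char trig_root_diag.
  apply/eigenvalueP; exists (u *m P); last by rewrite mulmx_free_eq0 ?row_free_unit.
  by rewrite -mulmxA -[P *m M](mulmxKV unitP) -/T mulmxA uT scalemxAl.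
have MP : M *m invmx P = invmx P *m T by rewrite /T !mulmxA mulVmx ?mul1mx.
have psdX' : psdmx ((invmx P)^t* *m X *m invmx P).
  apply: (trig_stein trigT T_lt1); first by rewrite !trmxC_mul trmxCK hX mulmxA.
  move=> v; rewrite hform_stein !hform_congr [invmx P *m (T *m v)]mulmxA -MP.
  by rewrite -mulmxA -hform_stein.
by move=> v; rewrite -[v](mulKmx unitP) -hform_congr.
Qed.

Lemma stein_fixpoint_eq0 n (M H : 'M[C]_n) :
  (forall z, root (char_poly M) z -> `|z| < 1) ->
  H^t* = H -> M^t* *m H *m M = H -> H = 0.
Proof.
move=> M_lt1 hH HM; have psd_stein (X : 'M[C]_n) : X^t* = X -> M^t* *m X *m M = X -> psdmx X.
  by move=> hX XM; apply: (stein M_lt1) => // v; rewrite XM subrr /hform mulmx0 mul0mx mxE.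
apply: hform_diag_eq0 => v; apply/eqP; rewrite eq_le psd_stein // andbT.
have := psd_stein (- H); rewrite trmxCN hH mulmxN mulNmx HM.
by move=> /(_ erefl erefl v); rewrite hformN oppr_ge0.
Qed.

End SteinTheorem.

(** * Complexification of real matrices *)

Section Complexification.
Variable R : rcfType.
Local Notation C := R[i].

Lemma cplx_mxM m n p (A : 'M[R]_(m, n)) (B : 'M[R]_(n, p)) :
  cplx_mx (A *m B) = cplx_mx A *m cplx_mx B.
Proof. exact: map_mxM. Qed.

Lemma cplx_mxD m n (A B : 'M[R]_(m, n)) : cplx_mx (A + B) = cplx_mx A + cplx_mx B.
Proof. exact: map_mxD. Qed.

Lemma cplx_mxB m n (A B : 'M[R]_(m, n)) : cplx_mx (A - B) = cplx_mx A - cplx_mx B.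
Proof. exact: map_mxB. Qed.

Lemma cplx_mx_inj m n : injective (@cplx_mx R m n).
Proof. exact: map_mx_inj. Qed.

Lemma cplx_mx_unit n (A : 'M[R]_n) : (cplx_mx A \in unitmx) = (A \in unitmx).
Proof. exact: map_unitmx. Qed.

Lemma cplx_mx_inv n (A : 'M[R]_n) : cplx_mx (invmx A) = invmx (cplx_mx A).
Proof. exact: map_invmx. Qed.

Lemma conjC_real_complex (x : R) : (x%:C%C)^* = x%:C%C :> C.
Proof. by apply: conj_Creal; rewrite complex_real. Qed.

Lemma trmxC_cplx m n (A : 'M[R]_(m, n)) : (cplx_mx A)^t* = cplx_mx A^T.
Proof. by apply/matrixP => i j; rewrite !mxE conjC_real_complex. Qed.

Lemma hform_cplx m n (P : 'M[R]_(m, n)) u v :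
  hform (cplx_mx P) (cplx_mx u) (cplx_mx v) = ((u^T *m P *m v) 0 0)%:C%C.
Proof. by rewrite /hform trmxC_cplx -!cplx_mxM mxE. Qed.

Lemma posdef_ge0 n (P : 'M[R]_n) (v : 'cV[R]_n) : posdef P -> 0 <= (v^T *m P *m v) 0 0.
Proof.
move=> [_ pdP]; have [->|nz] := eqVneq v 0; first by rewrite mulmx0 mxE.
exact/ltW/pdP.
Qed.

(* Split w = a + 'i b into real and imaginary parts; the cross terms cancel by symmetry of P. *)
Lemma pdmx_cplx n (P : 'M[R]_n) : posdef P -> pdmx (cplx_mx P).
Proof.
move=> pdP w nz.
set a := map_mx (@complex.Re R) w; set b := map_mx (@complex.Im R) w.
have wE : w = cplx_mx a + 'i *: cplx_mx b.
  by apply/matrixP => i j; rewrite !mxE; exact: complexE.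
have sym : (a^T *m P *m b) 0 0 = (b^T *m P *m a) 0 0.
  have tr11 (X : 'M[R]_1) : X 0 0 = X^T 0 0 by rewrite mxE.
  by rewrite tr11 !trmx_mul trmxK pdP.1 mulmxA.
rewrite wE !hformDl !hformDr !hformZl !hformZr !hform_cplx sym conjCi.
have -> : forall x y z : C, x + 'i * z + (- 'i * z + - 'i * ('i * y)) = x + y.
  have i2 : 'i * 'i = -1 :> C by rewrite -expr2 sqrCi.
  by move=> x y z; rewrite mulrA [- 'i * 'i]mulNr i2 opprK mul1r; ring.
rewrite -rmorphD ltcR.
have [a0|anz] := eqVneq a 0.
  have bnz : b != 0.
    by apply: contra nz => /eqP b0; rewrite wE a0 b0 /cplx_mx !map_mx0 scaler0 addr0.
  by rewrite ltr_wpDl ?posdef_ge0 //; apply: pdP.2.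
by rewrite ltr_wpDr ?posdef_ge0 //; apply: pdP.2.
Qed.

Lemma posdef_unit n (P : 'M[R]_n) : posdef P -> P \in unitmx.
Proof. by move=> /pdmx_cplx/pdmx_unit; rewrite cplx_mx_unit. Qed.

Lemma mem_eigvals n (A : 'M[R]_n) z : (z \in eigvals A) = root (char_poly (cplx_mx A)) z.
Proof.
have /eqP E := xchooseP (char_poly_splits A).
by rewrite -root_prod_XsubC -E.
Qed.

Lemma normC_cmod (z : C) : `|z| = (cmod z)%:C%C.
Proof. exact: normc_def. Qed.

Lemma eigvals_norm_le n (A : 'M[R]_n) z :
  root (char_poly (cplx_mx A)) z -> `|z| <= (spectral_radius A)%:C%C.
Proof.
rewrite -mem_eigvals normC_cmod lecR => z_eig.
exact: (le_bigmax_seq _ _ _ _ z_eig isT).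
Qed.

Lemma spectral_radius_le n (A : 'M[R]_n) r : 0 <= r ->
  (forall z, root (char_poly (cplx_mx A)) z -> `|z| <= r%:C%C) -> spectral_radius A <= r.
Proof.
move=> r_ge0 le_r; rewrite /spectral_radius big_seq; apply: bigmax_le => // z.
by rewrite mem_eigvals -lecR -normC_cmod => /le_r.
Qed.

Lemma spectral_radius_lt1_roots n (A : 'M[R]_n) z : spectral_radius A < 1 ->
  root (char_poly (cplx_mx A^T)) z -> `|z| < 1.
Proof.
move=> rho_lt1; rewrite /cplx_mx -map_trmx char_poly_trmx => /eigvals_norm_le z_le.
by apply: le_lt_trans z_le _; rewrite -[1]/(1%:C%C) ltcR.
Qed.

End Complexification.

(** * The lag-one regression matrix *)

Section LagOneRegression.
Variables (R : rcfType) (dx dy : nat).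
Variables (A Bw : 'M[R]_dx) (C : 'M[R]_(dy, dx)) (Dv : 'M[R]_dy) (Sx : 'M[R]_dx).
Hypotheses (rhoA_lt1 : spectral_radius A < 1) (covSx : stationary_state_cov A Bw Sx).

Let M := cplx_mx A^T.
Let X := cplx_mx Sx.

Let M_roots_lt1 z : root (char_poly M) z -> `|z| < 1.
Proof. exact: spectral_radius_lt1_roots. Qed.

Let trmxC_M : M^t* = cplx_mx A.
Proof. by rewrite trmxC_cplx trmxK. Qed.

(* Sx - Sx^T is a fixpoint of Z |-> A Z A^T; multiplying by 'i makes it Hermitian. *)
Lemma stationary_state_cov_sym : Sx^T = Sx.
Proof.
have covSxT : Sx^T = A *m Sx^T *m A^T + Bw *m Bw^T.
  by rewrite {1}covSx linearD /= !trmx_mul !trmxK mulmxA.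
set Z := Sx - Sx^T.
have ZA : A *m Z *m A^T = Z.
  by rewrite /Z mulmxBr mulmxBl {2}covSxT {3}covSx opprD addrACA subrr addr0.
have /eqP : 'i *: cplx_mx Z = 0.
  apply: (stein_fixpoint_eq0 M_roots_lt1).
    have ZT : Z^T = - Z by rewrite /Z linearB /= trmxK opprB.
    by rewrite trmxCZ trmxC_cplx ZT /cplx_mx map_mxN conjCi scaleNr scalerN opprK.
  by rewrite trmxC_M -scalemxAr -scalemxAl -!cplx_mxM ZA.
rewrite scaler_eq0 (negbTE (neq0Ci _)) /= -(map_mx0 (real_complex R)).
by move=> /eqP/cplx_mx_inj/eqP; rewrite subr_eq0 => /eqP.
Qed.

Let trmxC_X : X^t* = X.
Proof. by rewrite trmxC_cplx stationary_state_cov_sym. Qed.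

Lemma stationary_state_cov_contract : psdmx (X - M^t* *m X *m M).
Proof.
have -> : X - M^t* *m X *m M = (cplx_mx Bw^T)^t* *m 1%:M *m cplx_mx Bw^T.
  rewrite trmxC_M mulmx1 trmxC_cplx trmxK -!cplx_mxM -cplx_mxB.
  by rewrite {1}covSx addrAC subrr add0r.
by apply: psdmx_congr => v; apply: hform1_ge0.
Qed.

Lemma stationary_state_cov_psd : psdmx X.
Proof. exact: (stein M_roots_lt1 trmxC_X stationary_state_cov_contract). Qed.

Lemma lag1_regression_root_norm_le1 z :
  posdef (Sigma_y C Dv Sx) ->
  root (char_poly (cplx_mx (lag1_cov A C Sx *m invmx (Sigma_y C Dv Sx)))) z ->
  `|z| <= 1.
Proof.
set S := Sigma_y C Dv Sx; set K := lag1_cov A C Sx => pdS.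
rewrite -eigenvalue_root_char => /eigenvalueP [u uKS u_nz].
have uK : u *m cplx_mx K = z *: (u *m cplx_mx S).
  move: uKS; rewrite cplx_mxM cplx_mx_inv scalemxAl => <-.
  by rewrite -!mulmxA mulVmx ?cplx_mx_unit ?posdef_unit ?mulmx1.
set w := u^t*; set p := (cplx_mx C)^t* *m w.
have w_nz : w != 0 by apply: contra u_nz => /eqP w0; rewrite -[u]trmxCK -/w w0 trmxC0.
have Kw : hform (cplx_mx K) w w = z * hform (cplx_mx S) w w.
  by rewrite /hform /w trmxCK uK -scalemxAl mxE.
have Sw_gt0 : 0 < hform (cplx_mx S) w w := pdmx_cplx pdS w_nz.
have Sw_ge : hform X p p <= hform (cplx_mx S) w w.
  have -> : cplx_mx S = ((cplx_mx C)^t*)^t* *m X *m (cplx_mx C)^t* +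
                        ((cplx_mx Dv)^t*)^t* *m 1%:M *m (cplx_mx Dv)^t*.
    by rewrite !trmxCK mulmx1 !trmxC_cplx -!cplx_mxM -cplx_mxD.
  by rewrite hformD !hform_congr lerDl hform1_ge0.
have Kw_eq : hform (cplx_mx K) w w = hform X (M *m p) p.
  have -> : cplx_mx K = ((cplx_mx C)^t*)^t* *m (M^t* *m X) *m (cplx_mx C)^t*.
    by rewrite trmxCK trmxC_M trmxC_cplx /K /lag1_cov -!cplx_mxM !mulmxA.
  by rewrite hform_congr [RHS]hformMl.
have Mp_le : hform X (M *m p) (M *m p) <= hform X p p.
  by rewrite -subr_ge0 -hform_stein; apply: stationary_state_cov_contract.
have := norm_hform_le trmxC_X stationary_state_cov_psd Mp_le.
rewrite -Kw_eq Kw normrM (ger0_norm (ltW Sw_gt0)) => zS_le.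
by rewrite -(ler_pM2r Sw_gt0) mul1r (le_trans zS_le Sw_ge).
Qed.

End LagOneRegression.

Theorem lemma5 (R : rcfType) (dx dy : nat)
  (A Bw : 'M[R]_dx) (C : 'M[R]_(dy, dx)) (Dv : 'M[R]_dy) (Sx : 'M[R]_dx) :
  spectral_radius A < 1 ->
  posdef (Dv *m Dv^T) ->
  stationary_state_cov A Bw Sx ->
  posdef (Sigma_y C Dv Sx) ->
  spectral_radius (lag1_cov A C Sx *m invmx (Sigma_y C Dv Sx)) <= 1.
Proof.
move=> rhoA_lt1 _ covSx pdS; apply: spectral_radius_le => // z.
exact: (lag1_regression_root_norm_le1 rhoA_lt1 covSx pdS).
Qed.
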